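(* Consider a homogeneous linear Cauchy elastic body with elasticity matrix $C_{\alpha\beta}=c_{\alpha\beta}+b_{\alpha\beta}$ ($c$ symmetric, $b$ antisymmetric) undergoing a homogeneous displacement-controlled deformation in which, for fixed indices $\xi\neq\eta$ in $\{1,\dots,6\}$, the only nonzero Voigt strains are $$\epsilon_\xi(t)=\mathring\epsilon_\xi\sin\frac{\pi k_\xi t}{t_0},\qquad \epsilon_\eta(t)=\mathring\epsilon_\eta\sin\frac{\pi k_\eta t}{t_0},\qquad t\in[0,t_0],$$ where $\mathring\epsilon_\xi,\mathring\epsilon_\eta$ are constants and $k_\xi,k_\eta$ are positive integers with $k_\xi+k_\eta$ odd. This path $\Gamma_{\xi\eta}$ is closed in strain space, and the net stress-work density is $$w(\Gamma_{\xi\eta})=\frac{4k_\xi k_\eta\,\mathring\epsilon_\xi\mathring\epsilon_\eta}{k_\eta^2-k_\xi^2}\,b_{\xi\eta};$$ hence $b_{\xi\eta}=\dfrac{k_\eta^2-k_\xi^2}{4k_\xi k_\eta\mathring\epsilon_\xi\mathring\epsilon_\eta}\,w(\Gamma_{\xi\eta})$ whenever $\mathring\epsilon_\xi\mathring\epsilon_\eta\neq0$.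
   Context: Linear Cauchy elasticity: $\sigma_{ab}=\mathsf C_{abcd}\epsilon_{cd}$ with minor symmetries but not necessarily the major symmetry. In Voigt notation $(11,22,33,23,31,12)\leftrightarrow(1,\dots,6)$, $\sigma_\alpha=\sum_{\beta=1}^6C_{\alpha\beta}\epsilon_\beta$ with $C_{\alpha\beta}=c_{\alpha\beta}+b_{\alpha\beta}$, $c_{\alpha\beta}=c_{\beta\alpha}$, $b_{\alpha\beta}=-b_{\beta\alpha}$ (the antisymmetric elastic constants). For a homogeneous strain history $\epsilon_\alpha(t)$, $t\in[0,t_0]$, forming a closed path $\Gamma$ in strain space, the net stress-work density is $w(\Gamma)=\int_0^{t_0}\sum_{\alpha,\beta=1}^6C_{\alpha\beta}\,\epsilon_\beta(t)\,\dot\epsilon_\alpha(t)\,dt$. *)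

(* Voigt indices are 0..5 (paper's 1..6). *)
From Stdlib Require Import Reals Lra Lia Arith.
From Coquelicot Require Import Coquelicot.
Open Scope R_scope.

Definition voigt_sum (f : nat -> nat -> R) : R :=
  sum_n (fun a => sum_n (fun b => f a b) 5) 5.

Definition stress_work (C : nat -> nat -> R) (eps : nat -> R -> R) (t0 : R) : R :=
  RInt (fun t => voigt_sum (fun a b => C a b * eps b t * Derive (eps a) t)) 0 t0.

Definition sine_path (xi eta : nat) (exi eeta : R) (kxi keta : nat) (t0 : R)
  : nat -> R -> R :=
  fun a t =>
    if Nat.eqb a xi then exi * sin (PI * INR kxi * t / t0)
    else if Nat.eqb a eta then eeta * sin (PI * INR keta * t / t0)
    else 0.

(* Only the components xi and eta are active, so the integrand of the stress
   work is the time derivative of the energy of the symmetric part of C plus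
   b_{xi eta} (eps_eta deps_xi - eps_xi deps_eta).  On a closed path the exact
   part integrates to zero, leaving b_{xi eta} times the loop integral of
   eps_eta d eps_xi - eps_xi d eps_eta.  For the sine pair this integral has an
   explicit antiderivative, and its value 4 k_xi k_eta e_xi e_eta / (k_eta^2 -
   k_xi^2) comes from cos (k_xi PI) cos (k_eta PI) = -1 when k_xi + k_eta is
   odd. *)

From Stdlib Require Import Reals Lra Lia.
From Coquelicot Require Import Coquelicot.
Open Scope R_scope.

Ltac solve_continuous :=
  repeat match goal with
  | |- continuous (fun _ => ?c) _ => apply continuous_const
  | |- continuous (fun t => @?f t + @?g t) _ => apply (continuous_plus f g)
  | |- continuous (fun t => @?f t - @?g t) _ => apply (continuous_minus f g)
  | |- continuous (fun t => @?f t * @?g t) _ => apply (continuous_mult f g)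
  end; auto.

Lemma sum_n_indicator (f : nat -> R) (i n : nat) : (i <= n)%nat ->
  sum_n (fun a => if a =? i then f a else 0) n = f i.
Proof.
induction n as [|n IHn]; intro Hin.
- replace i with 0%nat by lia. rewrite sum_O. reflexivity.
- rewrite sum_Sn. destruct (Nat.eq_dec i (S n)) as [-> | Hne].
  + rewrite Nat.eqb_refl.
    assert (Hzero : sum_n (fun a => if a =? S n then f a else 0) n = zero).
    { rewrite <- (sum_n_m_const_zero 0 n). apply sum_n_m_ext_loc.
      intros k Hk. replace (k =? S n) with false by (symmetry; apply Nat.eqb_neq; lia).
      reflexivity. }
    rewrite Hzero. apply (plus_zero_l (G := R_AbelianMonoid)).
  + rewrite IHn by lia. replace (S n =? i) with false by (symmetry; apply Nat.eqb_neq; lia).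
    apply (plus_zero_r (G := R_AbelianMonoid)).
Qed.

Section TwoComponents.

Variables (xi eta : nat).

Definition two_component (x y : R) (a : nat) : R :=
  if a =? xi then x else if a =? eta then y else 0.

Hypothesis hne : xi <> eta.

Lemma sum_n_two_component (x y : R) (f : nat -> R) (n : nat) :
  (xi <= n)%nat -> (eta <= n)%nat ->
  sum_n (fun a => two_component x y a * f a) n = x * f xi + y * f eta.
Proof.
intros Hxi Heta.
transitivity (sum_n (fun a => plus (if a =? xi then x * f a else 0)
                                   (if a =? eta then y * f a else 0)) n).
- apply sum_n_ext. intro a. unfold two_component.
  destruct (Nat.eqb_spec a xi), (Nat.eqb_spec a eta);
    try (exfalso; congruence); unfold plus; simpl; subst; ring.
- rewrite sum_n_plus, !sum_n_indicator by assumption. reflexivity.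
Qed.

Lemma voigt_sum_two_component (C : nat -> nat -> R) (x y x' y' : R) :
  (xi < 6)%nat -> (eta < 6)%nat ->
  voigt_sum (fun a b => C a b * two_component x y b * two_component x' y' a)
  = C xi xi * x * x' + C xi eta * y * x' + C eta xi * x * y' + C eta eta * y * y'.
Proof.
intros Hxi Heta. unfold voigt_sum.
transitivity (sum_n (fun a => two_component x' y' a * (x * C a xi + y * C a eta)) 5).
- apply sum_n_ext. intro a.
  rewrite (sum_n_ext _ (fun b => two_component x y b * (C a b * two_component x' y' a)))
    by (intro; simpl; ring).
  rewrite sum_n_two_component by lia. simpl. ring.
- rewrite sum_n_two_component by lia. ring.
Qed.

Lemma voigt_sum_ext (f g : nat -> nat -> R) :
  (forall a b, f a b = g a b) -> voigt_sum f = voigt_sum g.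
Proof.
intro Hfg. unfold voigt_sum. apply sum_n_ext. intro a. apply sum_n_ext. intro b. apply Hfg.
Qed.

Lemma Derive_two_component (u v : R -> R) (a : nat) (t : R) :
  Derive (fun s => two_component (u s) (v s) a) t
  = two_component (Derive u t) (Derive v t) a.
Proof.
unfold two_component.
destruct (a =? xi); [reflexivity | destruct (a =? eta); [reflexivity | apply Derive_const]].
Qed.

Lemma stress_work_closed_two_component (C : nat -> nat -> R) (u v u' v' : R -> R)
    (t0 : R) :
  (xi < 6)%nat -> (eta < 6)%nat ->
  (forall t, is_derive u t (u' t)) -> (forall t, is_derive v t (v' t)) ->
  (forall t, continuous u' t) -> (forall t, continuous v' t) ->
  u 0 = u t0 -> v 0 = v t0 ->
  stress_work C (fun a t => two_component (u t) (v t) a) t0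
  = (C xi eta - C eta xi) / 2 * RInt (fun t => v t * u' t - u t * v' t) 0 t0.
Proof.
intros Hxi Heta Hu Hv Hu' Hv' Hu0 Hv0.
set (s := (C xi eta + C eta xi) / 2). set (d := (C xi eta - C eta xi) / 2).
set (energy := fun t => C xi xi * u t ^ 2 / 2 + C eta eta * v t ^ 2 / 2 + s * u t * v t).
set (power := fun t => C xi xi * u t * u' t + C eta eta * v t * v' t
                       + s * (u' t * v t + u t * v' t)).
set (loop := fun t => v t * u' t - u t * v' t).
assert (Hex_u : forall t, ex_derive u t) by (intro t; exists (u' t); apply Hu).
assert (Hex_v : forall t, ex_derive v t) by (intro t; exists (v' t); apply Hv).
assert (Hcont_u : forall t, continuous u t)
  by (intro t; apply (ex_derive_continuous (K := R_AbsRing) u), Hex_u).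
assert (Hcont_v : forall t, continuous v t)
  by (intro t; apply (ex_derive_continuous (K := R_AbsRing) v), Hex_v).
assert (Hpower : is_RInt power 0 t0 (minus (energy t0) (energy 0))).
{ apply (@is_RInt_derive R_CompleteNormedModule).
  - intros t _. unfold energy, power. auto_derive; [now repeat split | ].
    replace (Derive (fun x : R => u x) t) with (u' t)
      by (symmetry; apply is_derive_unique, Hu).
    replace (Derive (fun x : R => v x) t) with (v' t)
      by (symmetry; apply is_derive_unique, Hv).
    field.
  - intros t _. unfold power. solve_continuous. }
assert (Hloop : is_RInt loop 0 t0 (RInt loop 0 t0)).
{ apply (RInt_correct (V := R_CompleteNormedModule)), ex_RInt_continuous.
  intros t _. unfold loop. solve_continuous. }
unfold stress_work. apply is_RInt_unique.
apply (is_RInt_ext (fun t => plus (power t) (scal d (loop t)))).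
- intros t _.
  rewrite (voigt_sum_ext _
    (fun a b => C a b * two_component (u t) (v t) b * two_component (u' t) (v' t) a)).
  + rewrite voigt_sum_two_component by assumption.
    unfold power, loop, s, d, plus, scal. simpl. unfold mult. simpl. field.
  + intros a b. rewrite Derive_two_component,
      (is_derive_unique u t (u' t)), (is_derive_unique v t (v' t)) by auto.
    reflexivity.
- replace (d * RInt loop 0 t0)
    with (plus (minus (energy t0) (energy 0)) (scal d (RInt loop 0 t0))).
  + apply (is_RInt_plus (V := R_NormedModule)); [exact Hpower |].
    apply (is_RInt_scal (V := R_NormedModule)), Hloop.
  + unfold energy. rewrite Hu0, Hv0.
    unfold minus, plus, opp, scal. simpl. unfold mult. simpl. field.
Qed.

End TwoComponents.

Lemma sin_INR_mul_PI (n : nat) : sin (INR n * PI) = 0.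
Proof.
induction n as [|n IHn]; [rewrite Rmult_0_l; apply sin_0 |].
rewrite S_INR, Rmult_plus_distr_r, Rmult_1_l, sin_plus, IHn, sin_PI. ring.
Qed.

Lemma cos_INR_mul_PI (n : nat) : cos (INR n * PI) = (-1) ^ n.
Proof.
induction n as [|n IHn]; [rewrite Rmult_0_l; apply cos_0 |].
rewrite S_INR, Rmult_plus_distr_r, Rmult_1_l, cos_plus, IHn, sin_PI, cos_PI. simpl. ring.
Qed.

Lemma pow_neg1_odd (n : nat) : Nat.odd n = true -> (-1) ^ n = -1.
Proof.
intro Hodd. apply Nat.odd_spec in Hodd. destruct Hodd as [m ->].
rewrite Nat.add_1_r. apply pow_1_odd.
Qed.

Lemma INR_sqr_sub_neq0 (p q : nat) : p <> q -> INR q ^ 2 - INR p ^ 2 <> 0.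
Proof.
intros Hpq E. apply Hpq, INR_eq. pose proof (pos_INR p). pose proof (pos_INR q). nra.
Qed.

Section SineWaves.

Variables (t0 : R).
Hypothesis ht0 : t0 <> 0.

Definition sine_wave (e : R) (k : nat) (t : R) : R := e * sin (PI * INR k * t / t0).

Definition sine_wave_rate (e : R) (k : nat) (t : R) : R :=
  e * (PI * INR k / t0) * cos (PI * INR k * t / t0).

Lemma is_derive_sine_wave (e : R) (k : nat) (t : R) :
  is_derive (sine_wave e k) t (sine_wave_rate e k t).
Proof.
unfold sine_wave, sine_wave_rate. auto_derive; [exact I |]. unfold Rdiv. ring.
Qed.

Lemma continuous_sine_wave_rate (e : R) (k : nat) (t : R) :
  continuous (sine_wave_rate e k) t.
Proof.
apply (ex_derive_continuous (K := R_AbsRing) (V := R_NormedModule)).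
unfold sine_wave_rate. auto_derive. exact I.
Qed.

Lemma PI_INR_mul_div_t0 (k : nat) : PI * INR k * t0 / t0 = INR k * PI.
Proof. field. exact ht0. Qed.

Lemma sine_wave_closed (e : R) (k : nat) : sine_wave e k 0 = sine_wave e k t0.
Proof.
unfold sine_wave. rewrite PI_INR_mul_div_t0, sin_INR_mul_PI, Rmult_0_r, Rdiv_0_l, sin_0.
reflexivity.
Qed.

Lemma RInt_sine_wave_loop (ex ee : R) (p q : nat) : p <> q ->
  RInt (fun t => sine_wave ee q t * sine_wave_rate ex p t
                 - sine_wave ex p t * sine_wave_rate ee q t) 0 t0
  = 2 * INR p * INR q * (1 - (-1) ^ (p + q)) / (INR q ^ 2 - INR p ^ 2) * ex * ee.
Proof.
intro Hpq.
assert (Hden : INR q * INR q - INR p * INR p <> 0)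
  by (generalize (INR_sqr_sub_neq0 p q Hpq); lra).
set (P := INR p). set (Q := INR q).
set (antiderivative := fun t =>
  ex * ee * (- (P ^ 2 + Q ^ 2) * sin (PI * P * t / t0) * sin (PI * Q * t / t0)
             - 2 * P * Q * cos (PI * P * t / t0) * cos (PI * Q * t / t0))
  / (Q ^ 2 - P ^ 2)).
apply is_RInt_unique.
replace (2 * P * Q * (1 - (-1) ^ (p + q)) / (Q ^ 2 - P ^ 2) * ex * ee)
  with (minus (antiderivative t0) (antiderivative 0)).
- apply (@is_RInt_derive R_CompleteNormedModule).
  + intros t _. unfold antiderivative, sine_wave, sine_wave_rate. fold P Q.
    auto_derive; [exact I |]. unfold Rdiv. field. split; [exact ht0 | exact Hden].
  + intros t _. apply (ex_derive_continuous (K := R_AbsRing) (V := R_NormedModule)).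
    unfold sine_wave, sine_wave_rate. auto_derive. repeat split.
- unfold antiderivative, minus, plus, opp, P, Q. simpl.
  rewrite !PI_INR_mul_div_t0, !sin_INR_mul_PI, !cos_INR_mul_PI, pow_add.
  rewrite !Rmult_0_r, !Rdiv_0_l, sin_0, cos_0. field. exact Hden.
Qed.

End SineWaves.

Theorem mainTheorem8
  (c b : nat -> nat -> R)
  (hc : forall a bb, (a < 6)%nat -> (bb < 6)%nat -> c a bb = c bb a)
  (hb : forall a bb, (a < 6)%nat -> (bb < 6)%nat -> b a bb = - b bb a)
  (xi eta : nat) (hxi : (xi < 6)%nat) (heta : (eta < 6)%nat) (hne : xi <> eta)
  (exi eeta : R) (kxi keta : nat) (hkxi : (0 < kxi)%nat) (hketa : (0 < keta)%nat)
  (hodd : Nat.odd (kxi + keta) = true)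
  (t0 : R) (ht0 : 0 < t0) :
  let eps := sine_path xi eta exi eeta kxi keta t0 in
  let w := stress_work (fun a bb => c a bb + b a bb) eps t0 in
  (forall a, eps a 0 = eps a t0) /\
  w = 4 * INR kxi * INR keta * exi * eeta / (INR keta ^ 2 - INR kxi ^ 2) * b xi eta /\
  (exi * eeta <> 0 ->
   b xi eta = (INR keta ^ 2 - INR kxi ^ 2) / (4 * INR kxi * INR keta * exi * eeta) * w).
Proof.
intros eps w.
assert (Ht0 : t0 <> 0) by lra.
assert (Hk : kxi <> keta).
{ intros ->. rewrite Nat.odd_add, Bool.xorb_nilpotent in hodd. discriminate. }
pose proof (INR_sqr_sub_neq0 kxi keta Hk) as Hden.
change eps with (fun a t => two_component xi eta
  (sine_wave t0 exi kxi t) (sine_wave t0 eeta keta t) a) in w |- *.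
assert (Hw : w = 4 * INR kxi * INR keta * exi * eeta / (INR keta ^ 2 - INR kxi ^ 2)
                 * b xi eta).
{ unfold w.
  rewrite (stress_work_closed_two_component xi eta hne _ _ _
             (sine_wave_rate t0 exi kxi) (sine_wave_rate t0 eeta keta))
    by first [ assumption | intro; apply is_derive_sine_wave
             | intro; apply continuous_sine_wave_rate | apply sine_wave_closed, Ht0 ].
  rewrite RInt_sine_wave_loop, pow_neg1_odd by assumption.
  rewrite (hc eta xi), (hb eta xi) by assumption.
  field. exact Hden. }
split; [| split; [exact Hw |]].
- intro a. unfold two_component. rewrite <- !sine_wave_closed by exact Ht0. reflexivity.
- intro Hprod. rewrite Hw. field.
  repeat split; try exact Hden; try (intro E; apply Hprod; nra).
  all: apply not_0_INR; lia.
Qed.
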